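(* Let $P_1\subseteq P_2$ be meet semilattices with $0$ such that $P_1\subseteq P_2$ preserves finite covers. Suppose that for every $x\in P_2$ such that some element of $P_1$ is $\ge x$, there exist $y\in P_1$ with $x\le y$ and a finite set $\{y_1,\dots,y_n\}\subseteq P_1$ with $y_i\le y$ and $y_i\wedge x=0$ for all $i$, such that $\{y_1,\dots,y_n,x\}$ is a finite cover of $y$ in $P_2$. Then $P_1\subseteq P_2$ is tight, i.e. the image of the injective generalized Boolean algebra morphism $\mathcal T_c(P_1)\hookrightarrow\mathcal T_c(P_2)$, $U\mapsto re^{-1}(U)$, is an ideal of $\mathcal T_c(P_2)$.
   Context: A meet semilattice with $0$ is a meet semilattice with least element $0$; $P_1\subseteq P_2$ means an injective meet- and $0$-preserving map identifying $P_1$ with a subset of $P_2$. A filter of $P$ is a subset $F$ with $\emptyset\ne F\ne P$, closed upwards and under $\wedge$; $F(P)$ has the topology generated by $U_x=\{F:x\in F\}$, with basis of compact open sets $U_{(x:x_1,\dots,x_n)}=\{F:x\in F,\ x_1,\dots,x_n\notin F\}$. The tight filters $T(P)$ are the closure of the ultrafilters (maximal filters) in $F(P)$; $V^P_{(x:x_1,\dots,x_n)}=U_{(x:x_1,\dots,x_n)}\cap T(P)$, $V^P_x=V^P_{(x:)}$. $\mathcal T_c(P)$ is the generalized Boolean algebra of compact open subsets of the Hausdorff space $T(P)$. A finite cover of $x\in P$ is a finite set of elements $\le x$ such that every $0\ne y\le x$ meets one of them nontrivially. $P_1\subseteq P_2$ preserves finite covers if every finite cover in $P_1$ of $x\in P_1$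 is a finite cover of $x$ in $P_2$; in that case $re:\xi\mapsto\xi\cap P_1$ is a partial map $T(P_2)\dashrightarrow T(P_1)$ (defined when $\xi\cap P_1\ne\emptyset$), and $U\mapsto re^{-1}(U)$ is an injective generalized Boolean algebra morphism $\mathcal T_c(P_1)\to\mathcal T_c(P_2)$ sending $V^{P_1}_{(x:x_1,\dots,x_n)}\mapsto V^{P_2}_{(x:x_1,\dots,x_n)}$. An ideal of a generalized Boolean algebra $\mathcal B$ is a subset closed under joins and under meets with arbitrary elements of $\mathcal B$. *)

From Stdlib Require Import List.
From mathcomp Require Import all_boot all_order.
Set Implicit Arguments.
Unset Strict Implicit.
Unset Printing Implicit Defensive.
Import Order.TTheory.
Local Open Scope order_scope.

Section Semilattice.
Context {d : Order.disp_t} (P : bMeetSemilatticeType d).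

Definition is_filter (F : P -> Prop) : Prop :=
  (exists x, F x) /\ (exists x, ~ F x) /\
  (forall x y : P, F x -> x <= y -> F y) /\
  (forall x y : P, F x -> F y -> F (x `&` y)).

Definition is_ultrafilter (F : P -> Prop) : Prop :=
  is_filter F /\
  forall G : P -> Prop, is_filter G -> (forall x, F x -> G x) ->
    forall x, G x -> F x.

(* Points of F(P) are filters; subsets of F(P) are predicates on P -> Prop. *)
Definition fset := (P -> Prop) -> Prop.

Definition Ubasic (x : P) (xs : seq P) : fset :=
  fun F => F x /\ forall y, y \in xs -> ~ F y.

Definition openF (O : fset) : Prop :=
  (forall F, O F -> is_filter F) /\
  forall F, O F -> exists x xs, Ubasic x xs F /\
     forall G, is_filter G -> Ubasic x xs G -> O G.

(* Tight filters: closure of the set of ultrafilters in F(P). *)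
Definition is_tight (F : P -> Prop) : Prop :=
  is_filter F /\
  forall O : fset, openF O -> O F -> exists G, O G /\ is_ultrafilter G.

Definition Vbasic (x : P) (xs : seq P) : fset :=
  fun F => Ubasic x xs F /\ is_tight F.

Definition openT (W : fset) : Prop :=
  (forall F, W F -> is_tight F) /\
  forall F, W F -> exists x xs, Vbasic x xs F /\
     forall G, Vbasic x xs G -> W G.

Definition compactT (W : fset) : Prop :=
  forall (I : Type) (O : I -> fset), (forall i, openT (O i)) ->
    (forall F, W F -> exists i, O i F) ->
    exists s : seq I, forall F, W F -> exists i, List.In i s /\ O i F.

Definition Tc (W : fset) : Prop := openT W /\ compactT W.

Definition finite_cover (x : P) (C : seq P) : Prop :=
  (forall c, c \in C -> c <= x) /\
  forall y : P, y != \bot -> y <= x -> exists2 c, c \in C & y `&` c != \bot.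

End Semilattice.

Section Embedding.
Context {d1 d2 : Order.disp_t}
  (P1 : bMeetSemilatticeType d1) (P2 : bMeetSemilatticeType d2).

(* P1 ⊆ P2: injective meet- and 0-preserving map. *)
Definition semilattice_embedding (f : P1 -> P2) : Prop :=
  injective f /\ (forall x y, f (x `&` y) = f x `&` f y) /\ f \bot = \bot.

Definition preserves_finite_covers (f : P1 -> P2) : Prop :=
  forall (x : P1) (C : seq P1), finite_cover x C -> finite_cover (f x) (map f C).

Definition re_preimage (f : P1 -> P2) (U : fset P1) : fset P2 :=
  fun xi => is_tight xi /\ (exists a, xi (f a)) /\ U (fun a => xi (f a)).

Definition set_eq {T : Type} (A B : T -> Prop) : Prop := forall t, A t <-> B t.

Definition in_re_image (f : P1 -> P2) (W : fset P2) : Prop :=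
  exists U, Tc U /\ set_eq W (re_preimage f U).

Definition is_ideal_Tc (I : fset P2 -> Prop) : Prop :=
  (forall W, I W -> Tc W) /\
  (forall W1 W2, I W1 -> I W2 -> I (fun xi => W1 xi \/ W2 xi)) /\
  (forall W V, I W -> Tc V -> I (fun xi => W xi /\ V xi)).

End Embedding.

(* Compactness of the basic sets V_(x:x_1,...,x_n) (a maximal-bad-family argument
   with Zorn's lemma) shows that the compact open subsets of T(P) are exactly the
   finite unions of basic sets, and that they are closed under unions and
   differences.  Since re^{-1} commutes with these operations and sends
   V^{P1}_(a:a_1,...) to V^{P2}_(a:a_1,...), the image of T_c(P1) is closed under
   unions, and a meet with a basic set of T(P2) reduces to sets V^{P2}_(x:x_1,...)
   with x below some element of P1.  For such x the hypothesis provides y and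
   y_1, ..., y_n; as tight filters meet every finite cover, a tight xi contains x
   exactly when xi ∩ P1 lies in V^{P1}_(y:y_1,...,y_n), and the excluded x_i are
   removed by differences. *)

From mathcomp Require Import all_boot all_order.
From mathcomp Require Import boolp classical_sets.
Set Implicit Arguments.
Unset Strict Implicit.
Unset Printing Implicit Defensive.
Import Order.TTheory.
Local Open Scope order_scope.

Section Filters.
Context {d : Order.disp_t} (P : bMeetSemilatticeType d).
Implicit Types (F G : P -> Prop) (x y z : P) (C : seq P).

Lemma filter_not_bot F : is_filter F -> ~ F \bot.
Proof. by move=> [_ [[y Fy] [up _]]] Fb; apply: Fy; apply: up Fb (le0x y). Qed.

Lemma filter_up F x y : is_filter F -> F x -> x <= y -> F y.
Proof. by move=> [_ [_ [up _]]]; apply: up. Qed.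

Lemma filter_meet F x y : is_filter F -> F x -> F y -> F (x `&` y).
Proof. by move=> [_ [_ [_ me]]]; apply: me. Qed.

Lemma principal_filter z : z != \bot -> is_filter (fun u => z <= u).
Proof.
move=> z0; split; first by exists z.
split; first by exists \bot; rewrite lex0; exact/negP.
split; first by move=> a b za ab; exact: le_trans ab.
by move=> a b za zb; rewrite lexI za zb.
Qed.

(* The filter generated by an ultrafilter [F] and [z] is proper, hence equal to [F]. *)
Lemma ultra_mem F z : is_ultrafilter F -> (forall u, F u -> z `&` u != \bot) -> F z.
Proof.
move=> [fF maxF] zF.
pose G u := exists2 w, F w & z `&` w <= u.
have [[w0 Fw0] _] := fF.
have fG : is_filter G.
  split; first by exists (z `&` w0), w0.
  split; first by exists \bot => -[w Fw]; rewrite lex0; apply/negP/zF.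
  split; first by move=> a b [w Fw za] ab; exists w => //; exact: le_trans ab.
  move=> a b [w1 F1 l1] [w2 F2 l2]; exists (w1 `&` w2); first exact: filter_meet.
  rewrite lexI; apply/andP; split.
    by apply: le_trans l1; apply: leI2 => //; exact: leIl.
  by apply: le_trans l2; apply: leI2 => //; exact: leIr.
apply: (maxF G fG); first by move=> w Fw; exists w => //; exact: leIr.
by exists w0 => //; exact: leIl.
Qed.

Lemma ultra_disjoint F z : is_ultrafilter F -> ~ F z -> exists2 u, F u & z `&` u = \bot.
Proof.
move=> uF Fz; apply: contrapT => nu; apply: Fz; apply: ultra_mem => // u Fu.
by apply/eqP => zu0; apply: nu; exists u.
Qed.

Lemma ultra_avoid F x C : is_ultrafilter F -> F x -> (forall c, c \in C -> ~ F c) ->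
  exists w, [/\ F w, w <= x & forall c, c \in C -> w `&` c = \bot].
Proof.
move=> uF Fx; elim: C => [|c C IH] FC; first by exists x.
have [w [Fw wx wC]] : exists w, [/\ F w, w <= x & forall c, c \in C -> w `&` c = \bot].
  by apply: IH => c' c'C; apply: FC; rewrite inE c'C orbT.
have [u Fu cu] := ultra_disjoint uF (FC c (mem_head _ _)).
exists (w `&` u); split; first exact: filter_meet (proj1 uF) Fw Fu.
  by apply: le_trans wx; exact: leIl.
move=> c'; rewrite inE => /predU1P [->|c'C]; apply/eqP; rewrite -lex0.
  by rewrite -cu meetC; apply: leI2 => //; exact: leIr.
by rewrite -(wC c' c'C); apply: leI2 => //; exact: leIl.
Qed.

Lemma ultra_cover F x C : is_ultrafilter F -> F x -> finite_cover x C ->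
  exists2 c, c \in C & F c.
Proof.
move=> uF Fx [_ cov]; apply: contrapT => nC.
have [w [Fw wx wC]] := ultra_avoid uF Fx (fun c cC Fc => nC (ex_intro2 _ _ c cC Fc)).
have w0 : w != \bot by apply/eqP => w0; apply: filter_not_bot (proj1 uF) _; rewrite -w0.
by have [c cC] := cov w w0 wx; rewrite wC ?eqxx.
Qed.

Lemma tight_cover F x C : is_tight F -> F x -> finite_cover x C ->
  exists2 c, c \in C & F c.
Proof.
move=> [fF tF] Fx cov; apply: contrapT => nC.
pose O : fset P := fun G => is_filter G /\ Ubasic x C G.
have oO : openF O by split=> [G []|G [_ UG]]; last by exists x, C.
have [G [[_ [Gx GC]] uG]] :=
  tF O oO (conj fF (conj Fx (fun c cC Fc => nC (ex_intro2 _ _ c cC Fc)))).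
by have [c cC Gc] := ultra_cover uG Gx cov; apply: GC Gc.
Qed.

Lemma ultra_extend F0 : is_filter F0 ->
  exists2 H, is_ultrafilter H & forall x, F0 x -> H x.
Proof.
move=> fF0.
(* [set0] is admitted so that the union of the empty chain stays in the family. *)
pose Q : set (set P) := fun A => A = set0 \/ (is_filter A /\ (F0 `<=` A)%classic).
have chainQ (Fam : set (set P)) : (Fam `<=` Q)%classic -> total_on Fam subset ->
    Q (\bigcup_(X in Fam) X)%classic.
  move=> FamQ tot.
  have [[X FamX [x Xx]]|none] := pselect (exists2 X, Fam X & exists x, X x); last first.
    by left; apply/seteqP; split=> // y [X FamX Xy]; apply: none; exists X => //; exists y.
  have famF Y y : Fam Y -> Y y -> is_filter Y.
    by move=> FamY Yy; case: (FamQ _ FamY) => [Y0|[]//]; rewrite Y0 in Yy.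
  right; split; last first.
    by move=> y F0y; exists X => //; case: (FamQ _ FamX) => [X0|[_]]; [rewrite X0 in Xx|apply].
  split; first by exists x, X.
  split; first by exists \bot => -[Y FamY Yb]; exact: filter_not_bot (famF _ _ FamY Yb) Yb.
  split.
    by move=> a b [Y FamY Ya] ab; exists Y => //; exact: filter_up (famF _ _ FamY Ya) Ya ab.
  move=> a b [Y FamY Ya] [Z FamZ Zb].
  have [YZ|ZY] := tot _ _ FamY FamZ.
    by exists Z => //; apply: filter_meet (famF _ _ FamZ Zb) _ Zb; exact: YZ.
  by exists Y => //; apply: filter_meet (famF _ _ FamY Ya) Ya _; exact: ZY.
have [A [[A0|[fA F0A]] maxA]] := Zorn_bigcup chainQ.
  have [[x F0x] _] := fF0.
  exfalso; apply: (maxA F0); last by right; split=> //; exact: subset_refl.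
  by rewrite A0; split=> [y []|/(_ x F0x) []].
exists A => //; split=> // G fG AG x Gx; apply: contrapT => Ax.
apply: (maxA G); last by right; split=> // y /F0A /AG.
by split=> // GA; exact: Ax (GA _ Gx).
Qed.

End Filters.

Lemma chain_bigcup_seq (T : eqType) (Fam : set (set T)) (s : seq T) :
  total_on Fam subset -> (forall t, t \in s -> (\bigcup_(X in Fam) X)%classic t) ->
  s = [::] \/ exists2 X, Fam X & forall t, t \in s -> X t.
Proof.
move=> tot; elim: s => [|t s IH] sFam; first by left.
right; have [X0 FamX0 X0t] := sFam t (mem_head _ _).
have [s0|[X FamX Xs]] := IH (fun u us => sFam u (mem_behead (s := t :: s) us)).
  by exists X0 => // u; rewrite s0 inE => /eqP ->.
have [X0X|XX0] := tot _ _ FamX0 FamX.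
  by exists X => // u; rewrite inE => /predU1P [->|/Xs //]; exact: X0X.
by exists X0 => // u; rewrite inE => /predU1P [->|/Xs/XX0 //].
Qed.

Section Compactness.
Context {d : Order.disp_t} (P : bMeetSemilatticeType d).
Implicit Types (F : P -> Prop) (s : seq (P * bool)).

(* Finite lists of literals describe the basic open sets of the product topology
   on [P -> Prop]. *)
Definition lit F (pb : P * bool) : Prop := if pb.2 then F pb.1 else ~ F pb.1.

Definition lits_hold F s : Prop := foldr (fun pb acc => lit F pb /\ acc) True s.

Lemma lits_holdP F s : lits_hold F s <-> forall pb, pb \in s -> lit F pb.
Proof.
elim: s => [|pb s IH] //=; split=> [[Fpb /IH Fs] q|Fs].
  by rewrite inE => /predU1P [->|/Fs].
by split; [apply: Fs; rewrite mem_head|apply/IH => q qs; apply: Fs; rewrite inE qs orbT].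
Qed.

Definition basic_lits (a : P) (bs : seq P) : seq (P * bool) :=
  (a, true) :: [seq (q, false) | q <- bs].

Lemma lits_hold_basic F a bs : lits_hold F (basic_lits a bs) <-> Ubasic a bs F.
Proof.
rewrite /Ubasic /=; split=> -[Fa Fbs]; split=> //.
  by move=> q qbs; apply: (proj1 (lits_holdP _ _) Fbs (q, false)); apply/mapP; exists q.
by apply/lits_holdP => _ /mapP [q qbs ->]; exact: Fbs.
Qed.

Variables (x : P) (xs : seq P).

Definition cyl s : fset P := fun F => Vbasic x xs F /\ lits_hold F s.

(* [Vbasic x xs] is closed in the product topology on [P -> Prop]. *)
Lemma Vbasic_closed F0 : (forall s, lits_hold F0 s -> exists F, cyl s F) -> Vbasic x xs F0.
Proof.
move=> adh.
have F0x : F0 x.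
  apply: contrapT => nx; have [F [[[Fx _] _] [nFx _]]] := adh [:: (x, false)] (conj nx I).
  exact: nFx Fx.
have fF0 : is_filter F0.
  split; first by exists x.
  split.
    exists \bot => F0b; have [F [[_ [fF _]] [Fb _]]] := adh [:: (\bot, true)] (conj F0b I).
    exact: filter_not_bot fF Fb.
  split.
    move=> a b F0a ab; apply: contrapT => nb.
    have [F [[_ [fF _]] [Fa [nFb _]]]] := adh [:: (a, true); (b, false)] (conj F0a (conj nb I)).
    exact: nFb (filter_up fF Fa ab).
  move=> a b F0a F0b; apply: contrapT => nab.
  have [F [[_ [fF _]] [Fa [Fb [nFab _]]]]] :=
    adh [:: (a, true); (b, true); (a `&` b, false)] (conj F0a (conj F0b (conj nab I))).
  exact: nFab (filter_meet fF Fa Fb).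
split; split=> //.
  move=> q qxs F0q; have [F [[[_ Fxs] _] [Fq _]]] := adh [:: (q, true)] (conj F0q I).
  exact: Fxs qxs Fq.
move=> O [Ofilter Oopen] OF0.
have [a [bs [UF0 sub]]] := Oopen F0 OF0.
have [F [[_ [fF tF]] /lits_hold_basic UF]] :=
  adh (basic_lits a bs) (proj2 (lits_hold_basic F0 a bs) UF0).
exact: tF O (conj Ofilter Oopen) (sub F fF UF).
Qed.

Section BadFamilies.
Variables (I : Type) (O : I -> fset P).

Definition fin_covered (A : fset P) : Prop :=
  exists t : seq I, forall F, A F -> exists i, List.In i t /\ O i F.

Definition bad (M : set (P * bool)) : Prop :=
  forall s, (forall pb, pb \in s -> M pb) -> ~ fin_covered (cyl s).

Lemma bad_cyl_nonempty M s : bad M -> (forall pb, pb \in s -> M pb) -> exists F, cyl s F.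
Proof.
move=> bM sM; apply: contrapT => cyl0; apply: (bM s sM).
by exists [::] => F cF; case: cyl0; exists F.
Qed.

Lemma bad_maximal : bad set0 -> exists M, bad M /\ forall B, (M `<` B)%classic -> ~ bad B.
Proof.
move=> bad0; apply: Zorn_bigcup => Fam Fambad tot s sFam.
have [->|[X FamX Xs]] := chain_bigcup_seq tot sFam; last exact: Fambad FamX s Xs.
by apply: bad0 => pb; rewrite in_nil.
Qed.

Lemma maximal_bad_decides M p : bad M -> (forall B, (M `<` B)%classic -> ~ bad B) ->
  M (p, true) \/ M (p, false).
Proof.
move=> bM maxM; apply: contrapT => /not_orP [Mt Mf].
have grow b : ~ M (p, b) ->
    exists2 s, (forall pb, pb \in s -> pb = (p, b) \/ M pb) & fin_covered (cyl s).
  move=> Mb; apply: contrapT => nocov; apply: (maxM (fun pb => M pb \/ pb = (p, b))).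
    by split=> [pb Mpb|sub]; [left|apply: Mb; apply: sub; right].
  by move=> s sM cov; apply: nocov; exists s => // pb /sM []; [right|left].
have [s1 s1M [t1 cov1]] := grow true Mt.
have [s2 s2M [t2 cov2]] := grow false Mf.
pose s := [seq q <- s1 | q != (p, true)] ++ [seq q <- s2 | q != (p, false)].
apply: (bM s).
  move=> q; rewrite mem_cat !mem_filter => /orP [] /andP [/eqP nq].
    by move=> /s1M [].
  by move=> /s2M [].
exists (t1 ++ t2) => F [VF /lits_holdP Fs].
have lits_hold_of_s b sb : lit F (p, b) ->
    (forall q, q \in sb -> q != (p, b) -> q \in s) -> lits_hold F sb.
  move=> Fpb sbs; apply/lits_holdP => q qsb.
  by have [->//|nq] := eqVneq q (p, b); apply: Fs; exact: sbs.
have [Fp|nFp] := pselect (F p).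
  have [|i [it Oi]] := cov1 F; last by exists i; split=> //; apply: List.in_or_app; left.
  split=> //; apply: (lits_hold_of_s true) Fp _ => q qs1 nq.
  by rewrite mem_cat mem_filter nq qs1.
have [|i [it Oi]] := cov2 F; last by exists i; split=> //; apply: List.in_or_app; right.
split=> //; apply: (lits_hold_of_s false) nFp _ => q qs2 nq.
by rewrite mem_cat !mem_filter nq qs2 orbT.
Qed.

End BadFamilies.

Lemma compact_Vbasic : compactT (Vbasic x xs).
Proof.
move=> I O Oopen cover; apply: contrapT => nfin.
have bad0 : bad O set0.
  case=> [_ [t cov]|pb s /(_ pb (mem_head _ _)) //].
  by apply: nfin; exists t => F VF; apply: cov.
have [M [bM maxM]] := bad_maximal bad0.
pose F0 p := M (p, true).
have M_lit pb : lit F0 pb -> M pb.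
  by case: pb => p [] //= nF0p; case: (maximal_bad_decides p bM maxM).
have VF0 : Vbasic x xs F0.
  apply: Vbasic_closed => s /lits_holdP F0s.
  by apply: bad_cyl_nonempty bM _ => pb /F0s /M_lit.
have [i Oi] := cover F0 VF0.
have [b [bs [[Ub _] sub]]] := proj2 (Oopen i) F0 Oi.
apply: (bM (basic_lits b bs)).
  by move=> pb; move/lits_hold_basic/lits_holdP: Ub => Ub /Ub /M_lit.
exists [:: i] => F [[_ tF] /lits_hold_basic UF]; exists i; split; first by left.
by apply: sub; split.
Qed.

End Compactness.

Section CompactOpen.
Context {d : Order.disp_t} (P : bMeetSemilatticeType d).
Implicit Types (F : P -> Prop) (A B W : fset P) (L : seq (P * seq P)) (x y : P) (xs ys : seq P).

Definition Vunion L : fset P := foldr (fun p A => (Vbasic p.1 p.2 `|` A)%classic) set0 L.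

Lemma Vunion_mapP (J : eqType) (g : J -> P * seq P) (js : seq J) F :
  Vunion [seq g j | j <- js] F <-> exists2 j, j \in js & Vbasic (g j).1 (g j).2 F.
Proof.
elim: js => [|j js IH] /=; first by split=> [[]|[]].
split=> [[Vj|/IH [k ks Vk]]|[k]]; first by exists j; rewrite ?mem_head.
  by exists k; rewrite // inE ks orbT.
by rewrite inE => /predU1P [->|ks Vk]; [left|right; apply/IH; exists k].
Qed.

Lemma openT_setU A B : openT A -> openT B -> openT (A `|` B)%classic.
Proof.
move=> [tA oA] [tB oB]; split=> [F [/tA|/tB] //|F [/oA|/oB] [a [as_ [Va sub]]]].
  by exists a, as_; split=> // G /sub; left.
by exists a, as_; split=> // G /sub; right.
Qed.

Lemma compactT_setU A B : compactT A -> compactT B -> compactT (A `|` B)%classic.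
Proof.
move=> cA cB J O Oopen cov.
have [tA HA] := cA J O Oopen (fun F AF => cov F (or_introl AF)).
have [tB HB] := cB J O Oopen (fun F BF => cov F (or_intror BF)).
exists (tA ++ tB) => F [/HA|/HB] [j [jt Oj]]; exists j; split=> //; apply: List.in_or_app.
  by left.
by right.
Qed.

Lemma Tc_set0 : Tc (@set0 (P -> Prop)).
Proof. by split; [split=> F []|move=> J O _ _; exists [::] => F []]. Qed.

Lemma Tc_Vbasic x xs : Tc (Vbasic x xs).
Proof.
split; last exact: compact_Vbasic.
by split=> [F []|F VF]; last exists x, xs.
Qed.

Lemma Tc_setU A B : Tc A -> Tc B -> Tc (A `|` B)%classic.
Proof. by move=> [oA cA] [oB cB]; split; [exact: openT_setU|exact: compactT_setU]. Qed.

Lemma Tc_Vunion L : Tc (Vunion L).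
Proof. by elim: L => [|p L IH]; [exact: Tc_set0|exact: Tc_setU (Tc_Vbasic _ _) IH]. Qed.

Lemma TcP W : Tc W <-> exists L, W = Vunion L.
Proof.
split=> [[[tW oW] cW]|[L ->]]; last exact: Tc_Vunion.
pose J := {p : P * seq P | forall G, Vbasic p.1 p.2 G -> W G}.
have cov F : W F -> exists j : J, Vbasic (sval j).1 (sval j).2 F.
  by move=> WF; have [a [as_ [Va sub]]] := oW F WF; exists (exist _ (a, as_) sub).
have [t Ht] := cW J (fun j => Vbasic (sval j).1 (sval j).2) (fun j => proj1 (Tc_Vbasic _ _)) cov.
exists (map sval t); apply/predeqP => F; split=> [/Ht [j [jt Vj]]|].
  by elim: t jt {Ht} => [//|k t IH] /= [->|jt]; [left|right; exact: IH].
elim: t {Ht} => [[]|k t IH] /= [Vk|/IH //]; exact: svalP k F Vk.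
Qed.

Lemma Vbasic_setI x xs y ys :
  (Vbasic x xs `&` Vbasic y ys)%classic = Vbasic (x `&` y) (xs ++ ys).
Proof.
apply/predeqP => F; split=> [[[[Fx Fxs] tF] [[Fy Fys] _]]|[[Fxy Fn] tF]].
  split=> //; split; first exact: filter_meet (proj1 tF) Fx Fy.
  by move=> q; rewrite mem_cat => /orP [/Fxs|/Fys].
have fF := proj1 tF; split; split=> //; split.
- exact: filter_up fF Fxy (leIl _ _).
- by move=> q qxs; apply: Fn; rewrite mem_cat qxs.
- exact: filter_up fF Fxy (leIr _ _).
- by move=> q qys; apply: Fn; rewrite mem_cat qys orbT.
Qed.

Lemma Vbasic_cons x b bs :
  Vbasic x (b :: bs) = (Vbasic x bs `\` Vbasic (x `&` b)%O [::])%classic.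
Proof.
apply/predeqP => F; split=> [[[Fx Fbs] tF]|[[[Fx Fbs] tF] nFxb]].
  split; first by split=> //; split=> // q qbs; apply: Fbs; rewrite inE qbs orbT.
  by move=> [[Fxb _] _]; apply: (Fbs b (mem_head _ _)); exact: filter_up (proj1 tF) Fxb (leIr _ _).
split=> //; split=> // q; rewrite inE => /predU1P [-> Fb|/Fbs //].
by apply: nFxb; split=> //; split=> //; exact: filter_meet (proj1 tF) Fx Fb.
Qed.

(* A tight filter containing [z] but not in [Vbasic z zs] contains some [z_j]. *)
Lemma Vbasic_setD a as_ z zs : (Vbasic a as_ `\` Vbasic z zs)%classic =
  Vunion ((a, z :: as_) :: [seq (a `&` zj, as_) | zj <- zs]).
Proof.
apply/predeqP => F /=; rewrite Vunion_mapP; split.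
  move=> [[[Fa Fas] tF] nV]; have [Fz|nFz] := pselect (F z); last first.
    by left; split=> //; split=> // q; rewrite inE => /predU1P [->|/Fas].
  right; apply: contrapT => nzs; apply: nV; split=> //; split=> // zj zjs Fzj.
  by apply: nzs; exists zj => //; split=> //; split=> //; exact: filter_meet (proj1 tF) Fa Fzj.
move=> [[[Fa Fzas] tF]|[zj zjs [[Faz Fas] tF]]].
  split; first by split=> //; split=> // q qas; apply: Fzas; rewrite inE qas orbT.
  by move=> [[Fz _] _]; exact: Fzas z (mem_head _ _) Fz.
split; first by split=> //; split=> //; exact: filter_up (proj1 tF) Faz (leIl _ _).
by move=> [[_ Fzs] _]; apply: Fzs zjs _; exact: filter_up (proj1 tF) Faz (leIr _ _).
Qed.

Lemma Tc_setD_Vbasic A z zs : Tc A -> Tc (A `\` Vbasic z zs)%classic.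
Proof.
move=> /TcP [L ->]; elim: L => [|p L IH] /=; first by rewrite set0D; exact: Tc_set0.
by rewrite setDUl Vbasic_setD; exact: Tc_setU (Tc_Vunion _) IH.
Qed.

Lemma Tc_setD A B : Tc A -> Tc B -> Tc (A `\` B)%classic.
Proof.
move=> TA /TcP [L ->]; elim: L A TA => [|p L IH] A TA /=; first by rewrite setD0.
by rewrite -setDDl; apply/IH/Tc_setD_Vbasic.
Qed.

End CompactOpen.

Section TightFilters.
Context {d : Order.disp_t} (P : bMeetSemilatticeType d).
Implicit Types (F : P -> Prop) (x : P) (C : seq P).

(* If some nonzero [c <= b] is disjoint from every [b_i], an ultrafilter above [c]
   lies in [U_(b : bs)]; otherwise the [b `&` b_i] form a finite cover of [b]. *)
Lemma tightP F : is_tight F <->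
  is_filter F /\ forall x C, F x -> finite_cover x C -> exists2 c, c \in C & F c.
Proof.
split=> [tF|[fF coverF]]; first by split=> [|x C]; [case: tF|exact: tight_cover].
split=> // O Oopen OF; have [b [bs [[Fb Fbs] sub]]] := proj2 Oopen F OF.
have [[c [c0 cb cbs]]|nc] :=
  pselect (exists c, [/\ c != \bot, c <= b & forall bi, bi \in bs -> c `&` bi = \bot]).
  have [H uH cH] := ultra_extend (principal_filter c0).
  exists H; split=> //; apply: sub; first exact: proj1 uH.
  split; first exact: cH _ cb.
  move=> bi bibs Hbi; apply: filter_not_bot (proj1 uH) _.
  by rewrite -(cbs bi bibs); apply: filter_meet (proj1 uH) (cH _ _) Hbi.
have cov : finite_cover b [seq b `&` bi | bi <- bs].
  split=> [_ /mapP [bi _ ->]|y y0 yb]; first exact: leIl.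
  apply: contrapT => ny; apply: nc; exists y; split=> // bi bibs.
  apply: contrapT => /eqP ybi; apply: ny; exists (b `&` bi); first by apply/mapP; exists bi.
  by rewrite meetA (meet_idPl yb).
have [_ /mapP [bi bibs ->] Fbbi] := coverF b _ Fb cov.
by case: (Fbs bi bibs); exact: filter_up fF Fbbi (leIr _ _).
Qed.

End TightFilters.

Section Restriction.
Context {d1 d2 : Order.disp_t}
  (P1 : bMeetSemilatticeType d1) (P2 : bMeetSemilatticeType d2) (f : P1 -> P2).
Hypotheses (emb : semilattice_embedding f) (pres : preserves_finite_covers f).
Implicit Types (xi : P2 -> Prop) (U V : fset P1) (W : fset P2) (L : seq (P1 * seq P1)).

Definition re xi : P1 -> Prop := fun a => xi (f a).

Lemma emb_le a b : a <= b -> f a <= f b.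
Proof. by move=> /meet_idPl ab; apply/meet_idPl; rewrite -(proj1 (proj2 emb)) ab. Qed.

Lemma re_tight xi a : is_tight xi -> xi (f a) -> is_tight (re xi).
Proof.
move=> /tightP [fxi coverxi] xia; have [_ [f_meet f_bot]] := emb.
apply/tightP; split=> [|b C xib /pres /(coverxi _ _ xib) [_ /mapP [c cC ->] xic]]; last by exists c.
split; first by exists a.
split; first by exists \bot; rewrite /re f_bot; exact: filter_not_bot.
split; first by move=> u v xiu uv; exact: filter_up fxi xiu (emb_le uv).
by move=> u v xiu xiv; rewrite /re f_meet; exact: filter_meet.
Qed.

Lemma re_preimage_Vbasic a as_ : re_preimage f (Vbasic a as_) = Vbasic (f a) (map f as_).
Proof.
apply/predeqP => xi; split=> [[txi [_ [[xia xias] _]]]|[[xia xias] txi]].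
  by split=> //; split=> // _ /mapP [q qas ->]; exact: xias.
split=> //; split; first by exists a.
split; last exact: re_tight txi xia.
by split=> // q qas; apply: xias; apply/mapP; exists q.
Qed.

Lemma re_preimage0 : re_preimage f set0 = set0.
Proof. by apply/predeqP => xi; split=> [[_ [_ []]]|[]]. Qed.

Lemma re_preimageU U V :
  re_preimage f (U `|` V)%classic = (re_preimage f U `|` re_preimage f V)%classic.
Proof.
apply/predeqP => xi; split=> [[txi [xia [Uxi|Vxi]]]|[[txi [xia Uxi]]|[txi [xia Vxi]]]];
  by [left|right|split=> //; split=> //; left|split=> //; split=> //; right].
Qed.

Lemma re_preimageD U V :
  re_preimage f (U `\` V)%classic = (re_preimage f U `\` re_preimage f V)%classic.
Proof.
apply/predeqP => xi; split=> [[txi [xia [Uxi nVxi]]]|[[txi [xia Uxi]] nV]].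
  by split=> // -[_ [_ Vxi]].
by split=> //; split=> //; split=> // Vxi; exact: nV.
Qed.

Lemma re_preimage_Vunion L :
  re_preimage f (Vunion L) = Vunion [seq (f p.1, map f p.2) | p <- L].
Proof.
by elim: L => [|p L IH] /=; rewrite ?re_preimage0 // re_preimageU re_preimage_Vbasic IH.
Qed.

Lemma in_re_imageE W : in_re_image f W <-> exists2 U, Tc U & W = re_preimage f U.
Proof.
split=> [[U [TU /predeqP ->]]|[U TU ->]]; first by exists U.
by exists U; split.
Qed.

Lemma in_re_image_Vunion W :
  in_re_image f W -> exists L, W = Vunion [seq (f p.1, map f p.2) | p <- L].
Proof. by move=> /in_re_imageE [U /TcP [L ->] ->]; exists L; exact: re_preimage_Vunion. Qed.

Lemma in_re_image_Tc W : in_re_image f W -> Tc W.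
Proof. by move=> /in_re_image_Vunion [L ->]; exact: Tc_Vunion. Qed.

Lemma in_re_image0 : in_re_image f set0.
Proof. by apply/in_re_imageE; exists set0; rewrite ?re_preimage0 //; exact: Tc_set0. Qed.

Lemma in_re_imageU W1 W2 :
  in_re_image f W1 -> in_re_image f W2 -> in_re_image f (W1 `|` W2)%classic.
Proof.
move=> /in_re_imageE [U1 TU1 ->] /in_re_imageE [U2 TU2 ->]; apply/in_re_imageE.
by exists (U1 `|` U2)%classic; [exact: Tc_setU|rewrite re_preimageU].
Qed.

Lemma in_re_imageD W1 W2 :
  in_re_image f W1 -> in_re_image f W2 -> in_re_image f (W1 `\` W2)%classic.
Proof.
move=> /in_re_imageE [U1 TU1 ->] /in_re_imageE [U2 TU2 ->]; apply/in_re_imageE.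
by exists (U1 `\` U2)%classic; [exact: Tc_setD|rewrite re_preimageD].
Qed.

Section CoverBelow.
Hypothesis cover_below : forall x : P2, (exists z : P1, x <= f z) ->
  exists (y : P1) (ys : seq P1),
    x <= f y /\
    (forall yi, yi \in ys -> yi <= y /\ f yi `&` x = \bot) /\
    finite_cover (f y) (rcons (map f ys) x).

(* A tight [xi] contains [x] iff [re xi] contains [y] and none of the [y_i]. *)
Lemma in_re_image_Vbasic_nil x a : x <= f a -> in_re_image f (Vbasic x [::]).
Proof.
move=> xa; have [y [ys [xy [ys_x cov]]]] := cover_below (ex_intro _ a xa).
apply/in_re_imageE; exists (Vbasic y ys); first exact: Tc_Vbasic.
apply/predeqP => xi; split=> [[[xix _] txi]|[txi [_ [[xiy xiys] _]]]].
  have xiy : xi (f y) := filter_up (proj1 txi) xix xy.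
  split=> //; split; first by exists y.
  split; last exact: re_tight txi xiy.
  split=> // yi yis xiyi; apply: filter_not_bot (proj1 txi) _.
  by rewrite -(proj2 (ys_x yi yis)); exact: filter_meet (proj1 txi) xiyi xix.
split=> //; split=> //; have [c] := tight_cover txi xiy cov.
by rewrite mem_rcons inE => /predU1P [->|/mapP [yi yis ->] /(xiys yi yis)].
Qed.

Lemma in_re_image_Vbasic x xs a : x <= f a -> in_re_image f (Vbasic x xs).
Proof.
move=> xa; elim: xs => [|b bs IH]; first exact: in_re_image_Vbasic_nil xa.
rewrite Vbasic_cons; apply: in_re_imageD IH (in_re_image_Vbasic_nil _).
exact: le_trans (leIl _ _) xa.
Qed.

Lemma in_re_imageI (W V : fset P2) : in_re_image f W -> Tc V -> in_re_image f (W `&` V)%classic.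
Proof.
move=> /in_re_image_Vunion [L1 ->] /TcP [L2 ->].
elim: L1 => [|p L1 IH] /=; first by rewrite set0I; exact: in_re_image0.
rewrite setIUl; apply: in_re_imageU IH.
elim: L2 => [|q L2 IH2] /=; first by rewrite setI0; exact: in_re_image0.
rewrite setIUr Vbasic_setI; apply: in_re_imageU IH2.
exact: in_re_image_Vbasic (leIl _ _).
Qed.

End CoverBelow.

End Restriction.

Theorem mainTheorem9 (d1 d2 : Order.disp_t)
  (P1 : bMeetSemilatticeType d1) (P2 : bMeetSemilatticeType d2)
  (f : P1 -> P2) :
  semilattice_embedding f ->
  preserves_finite_covers f ->
  (forall x : P2, (exists z : P1, x <= f z) ->
     exists (y : P1) (ys : seq P1),
       x <= f y /\
       (forall yi, yi \in ys -> yi <= y /\ f yi `&` x = \bot) /\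
       finite_cover (f y) (rcons (map f ys) x)) ->
  is_ideal_Tc (in_re_image f).
Proof.
move=> emb pres cover_below; split; first exact: in_re_image_Tc.
split; first exact: in_re_imageU.
exact: in_re_imageI.
Qed.
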